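(* Let $\Gamma$ be a simplicial complex and $p\ge 0$ an integer with $\mathrm{gr}_p(\Gamma)<\infty$. Then $\mathrm{gr}_{p-k}(\Gamma)\le \mathrm{gr}_p(\Gamma)-k$ for all $0\le k\le p$.
   Context: A simplicial complex $\Gamma$ on a finite vertex set $V=V(\Gamma)$ is a family of subsets of $V$ (faces) closed under taking subsets. For $W\subseteq V$, $\Gamma[W]=\{F\in\Gamma:F\subseteq W\}$; for a face $F$ (possibly empty), $\mathrm{lk}_\Gamma(F)=\{G\setminus F: F\subseteq G\in\Gamma\}$. Fix a field $\mathbf{k}$; $\tilde H_j(\cdot;\mathbf{k})$ is reduced simplicial homology (so $\tilde H_{-1}$ of the empty complex $\{\emptyset\}$ is nonzero). For $q\ge 0$, the $(q-1)$-girth is $\mathrm{gr}_{q-1}(\Gamma)=\min\{|W|: W\subseteq V(\Gamma),\ \tilde H_{q-1}(\mathrm{lk}_\Gamma(F)[W];\mathbf{k})\neq 0 \text{ for some face } F\in\Gamma \text{ (including } F=\emptyset)\}$, or $\infty$ if none exists. *)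

From HB Require Import structures.
From mathcomp Require Import all_boot all_order all_algebra.
Set Implicit Arguments. Unset Strict Implicit. Unset Printing Implicit Defensive.
Import GRing.Theory.

Section SimplicialDefs.
Variable k : fieldType.
Variable V : finType.

Definition simplicial_complex (K : {set {set V}}) : Prop :=
  forall F G : {set V}, F \in K -> G \subset F -> G \in K.

Definition induced (K : {set {set V}}) (W : {set V}) : {set {set V}} :=
  [set G in K | G \subset W].

Definition link (K : {set {set V}}) (F : {set V}) : {set {set V}} :=
  [set G :\: F | G in [set G in K | F \subset G]].

(* Faces of K with exactly s vertices (= (s-1)-dimensional faces). *)
Definition faces (K : {set {set V}}) (s : nat) : {set {set V}} :=
  [set F in K | #|F| == s].

Definition bsign (G : {set V}) (v : V) : k :=
  ((-1) ^+ #|[set w in G | (enum_rank w < enum_rank v)%N]|)%R.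

(* Coefficient of G in the boundary of the oriented simplex F. *)
Definition bcoef (F G : {set V}) : k :=
  (if G \proper F then \sum_(v in F :\: G) bsign G v else 0)%R.

(* Matrix of the simplicial boundary map from the chains on faces with s
   vertices to chains on faces with s-1 vertices (row-vector convention:
   a chain c maps to c *m bd K s).  For s = 0 this is the zero map out of
   C_{-1} (no proper subsets among faces of size 0), and bd K 1 is the
   augmentation C_0 -> C_{-1} (reduced homology). *)
Definition bd (K : {set {set V}}) (s : nat)
  : 'M[k]_(#|faces K s|, #|faces K s.-1|) :=
  \matrix_(i, j) bcoef (enum_val i) (enum_val j).

(* Reduced homology H~_{s-1}(K; k) is nonzero: ker ∂ on C_{s-1} is not
   contained in im ∂ from C_s. *)
Definition rhom_nonzero (K : {set {set V}}) (s : nat) : bool :=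
  ~~ (kermx (bd K s) <= bd K s.+1)%MS.

(* Sets W witnessing gr_{q-1}: H~_{q-1}(lk_K(F)[W]) <> 0 for some face F. *)
Definition girth_set (K : {set {set V}}) (q : nat) : {set {set V}} :=
  [set W : {set V} | [exists F in K, rhom_nonzero (induced (link K F) W) q]].

(* girth K q = gr_{q-1}(K); None encodes infinity. *)
Definition girth (K : {set {set V}}) (q : nat) : option nat :=
  if [pick W in girth_set K q] is Some W0
  then Some #|[arg min_(W < W0 in girth_set K q) #|W| ]|
  else None.

End SimplicialDefs.

From HB Require Import structures.
From mathcomp Require Import all_boot all_order all_algebra ring.
Set Implicit Arguments. Unset Strict Implicit. Unset Printing Implicit Defensive.
Import GRing.Theory.

(* By induction on j it suffices to show gr_{q-1}(K) <= gr_q(K) - 1 for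
   q >= 1 (girth_step).  Take W of minimal size n with H~_q(L) <> 0 for
   L = lk_K(F)[W], a q-cycle c of L that is not a boundary, a face A of L
   and a vertex v of A.  Minimality of W makes L0 = lk_K(F)[W \ v] acyclic
   in degree q, and L1 = lk_K(F u v)[W \ v] is the link of v in L.  The
   coefficients of c on the cones v * G form a (q-1)-cycle of L1
   (cycle_link); were it a boundary, c would be homologous to a cycle of L0,
   hence itself a boundary (link_not_boundary).  Thus W \ v, of size n - 1,
   witnesses gr_{q-1}(K). *)

Section ChainComplex.
Variables (k : fieldType) (V : finType).
Local Open Scope ring_scope.

Definition boundary (X : {set {set V}}) (s : nat) (c : {set V} -> k) (G : {set V}) : k :=
  \sum_(F in faces X s) c F * bcoef k F G.

Definition is_cycle (X : {set {set V}}) (s : nat) (c : {set V} -> k) : Prop :=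
  forall G, G \in faces X s.-1 -> boundary X s c G = 0.

Definition is_boundary (X : {set {set V}}) (s : nat) (c : {set V} -> k) : Prop :=
  exists d, forall G, G \in faces X s -> boundary X s.+1 d G = c G.

Definition homology_nonzero (X : {set {set V}}) (s : nat) : Prop :=
  exists c, is_cycle X s c /\ ~ is_boundary X s c.

Definition chain_row (X : {set {set V}}) (s : nat) (c : {set V} -> k)
  : 'rV[k]_#|faces X s| := \row_i c (enum_val i).

Definition row_chain (X : {set {set V}}) (s : nat) (u : 'rV[k]_#|faces X s|)
  (F : {set V}) : k := \sum_i u 0 i * (enum_val i == F)%:R.

Lemma row_chainK X s : cancel (@row_chain X s) (@chain_row X s).
Proof.
move=> u; apply/rowP => i; rewrite mxE /row_chain (bigD1 i) //= eqxx mulr1.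
rewrite big1 ?addr0 // => j /negbTE ji.
by rewrite (inj_eq enum_val_inj) ji mulr0.
Qed.

Lemma chain_row_bd X s c (i0 : 'I_1) j :
  (chain_row X s c *m bd k X s) i0 j = boundary X s c (enum_val j).
Proof.
rewrite mxE /boundary [RHS]big_enum_val /=.
by apply: eq_bigr => i _; rewrite !mxE.
Qed.

Lemma chain_rowP X s (c d : {set V} -> k) :
  chain_row X s c = chain_row X s d <-> {in faces X s, c =1 d}.
Proof.
split=> [/rowP E F FX | E]; last by apply/rowP => i; rewrite !mxE E ?enum_valP.
by have := E (enum_rank_in FX F); rewrite !mxE enum_rankK_in.
Qed.

Lemma is_cycle_row X s c :
  is_cycle X s c <-> (chain_row X s c <= kermx (bd k X s))%MS.
Proof.
rewrite sub_kermx; split=> [Z | /eqP Z G GX].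
  by apply/eqP/rowP => j; rewrite chain_row_bd Z ?enum_valP // mxE.
move/rowP/(_ (enum_rank_in GX G)): Z.
by rewrite chain_row_bd enum_rankK_in // mxE.
Qed.

Lemma is_boundary_row X s c :
  is_boundary X s c <-> (chain_row X s c <= bd k X s.+1)%MS.
Proof.
split=> [[d B] | /submxP [D E]].
  apply/submxP; exists (chain_row X s.+1 d); apply/rowP => i.
  have -> := @chain_row_bd X s.+1 d 0 i.
  by rewrite B ?enum_valP // mxE.
exists (row_chain D); apply/chain_rowP/rowP => i.
by rewrite !mxE -(@chain_row_bd X s.+1 _ 0 i) row_chainK -E mxE.
Qed.

Lemma rhom_nonzeroP X s : rhom_nonzero k X s <-> homology_nonzero X s.
Proof.
split=> [/row_subPn [i Ni] | [c [/is_cycle_row Z NB]]].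
  exists (row_chain (row i (kermx (bd k X s)))).
  split; first by apply/is_cycle_row; rewrite row_chainK row_sub.
  by move/is_boundary_row; rewrite row_chainK; apply/negP.
apply/negP => sub; apply: NB; apply/is_boundary_row.
exact: submx_trans sub.
Qed.

Lemma rhom_zeroP X s c :
  ~~ rhom_nonzero k X s -> is_cycle X s c -> is_boundary X s c.
Proof.
move=> /negbNE ker_sub /is_cycle_row c_ker; apply/is_boundary_row.
exact: submx_trans ker_sub.
Qed.

Lemma boundaryD X s (c d : {set V} -> k) G :
  boundary X s (fun A => c A + d A) G = boundary X s c G + boundary X s d G.
Proof. by rewrite /boundary -big_split; apply: eq_bigr => A _; rewrite mulrDl. Qed.

Lemma boundaryB X s (c d : {set V} -> k) G :
  boundary X s (fun A => c A - d A) G = boundary X s c G - boundary X s d G.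
Proof. by rewrite /boundary -sumrB; apply: eq_bigr => A _; rewrite mulrBl. Qed.

Lemma cycle_support X s c : ~ is_boundary X s c ->
  exists2 A, A \in faces X s & c A != 0.
Proof.
move=> NB; have [/exists_inP // | /exists_inPn c0] := boolP [exists A in faces X s, c A != 0].
case: NB; exists (fun _ => 0) => G GX.
by rewrite /boundary big1 => [|A _]; [apply/esym/eqP/negbNE/c0 | rewrite mul0r].
Qed.
End ChainComplex.


Section SetFacts.
Variable V : finType.

Lemma subset_card_succ (G H : {set V}) : H \subset G -> #|G| = #|H|.+1 ->
  exists2 u, u \notin H & G = u |: H.
Proof.
move=> HG cG; have /cards1P [u Eu] : #|G :\: H| == 1%N.
  by rewrite cardsDS // cG subSnn.
have : u \in G :\: H by rewrite Eu set11.
rewrite inE => /andP [uH _]; exists u => //.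
by rewrite -[LHS](setID G H) (setIidPr HG) Eu setUC.
Qed.

Lemma subset_card_succ2 (G H : {set V}) : H \subset G -> #|G| = #|H|.+2 ->
  exists a b, [/\ a != b, a \notin H, b \notin H & G = a |: (b |: H)].
Proof.
move=> HG cG; have /cards2P [a [b [ab Eab]]] : #|G :\: H| == 2.
  by rewrite cardsDS // cG -addn2 addKn.
have : a \in G :\: H /\ b \in G :\: H by rewrite Eab !inE !eqxx orbT.
rewrite !inE => -[/andP [aH _] /andP [bH _]]; exists a, b; split => //.
by rewrite -[LHS](setID G H) (setIidPr HG) Eab setUC setUA.
Qed.
End SetFacts.

Section Signs.
Variables (k : fieldType) (V : finType).
Local Open Scope ring_scope.

Lemma bsign_sq (G : {set V}) x : bsign k G x * bsign k G x = 1.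
Proof. by rewrite /bsign -expr2 sqrr_sign. Qed.

Lemma bsign_setU1 (H : {set V}) v u : v \notin H ->
  bsign k (v |: H) u = bsign k H u * (-1) ^+ (enum_rank v < enum_rank u)%N.
Proof.
move=> vH; rewrite /bsign -exprD; congr (_ ^+ _).
set S := [set w in H | (enum_rank w < enum_rank u)%N].
have vS : v \notin S by rewrite inE (negbTE vH).
case: (boolP (enum_rank v < enum_rank u)%N) => h.
  transitivity #|v |: S|; last by rewrite cardsU1 vS addnC.
  by apply: eq_card => w; rewrite !inE; case: eqP => // ->.
rewrite addn0; apply: eq_card => w.
by rewrite !inE; case: eqP => // ->; rewrite (negbTE h) (negbTE vH).
Qed.

(* Inserting a then b, or b then a, produces opposite signs; this is the
   cancellation behind the boundary squared being zero. *)
Lemma bsign_swap (H : {set V}) a b : a != b -> a \notin H -> b \notin H ->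
  bsign k (a |: H) b * bsign k H a = - (bsign k (b |: H) a * bsign k H b).
Proof.
move=> ab aH bH; rewrite !bsign_setU1 //.
case: ltngtP => [||/val_inj/enum_rank_inj E] /=; last by rewrite E eqxx in ab.
all: by move=> _; rewrite expr1 expr0; ring.
Qed.

Lemma bcoef_setU1 (H : {set V}) u : u \notin H -> bcoef k (u |: H) H = bsign k H u.
Proof.
move=> uH; rewrite /bcoef properUr ?sub1set //.
suff -> : (u |: H) :\: H = [set u] by rewrite big_set1.
by rewrite setDUl setDv setU0; apply/setDidPl; rewrite disjoints1.
Qed.

Lemma bcoef_notsub (G H : {set V}) : ~~ (H \subset G) -> bcoef k G H = 0.
Proof. by move=> nHG; rewrite /bcoef; case: ifP => // /proper_sub HG; rewrite HG in nHG. Qed.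
End Signs.

Section BoundarySquared.
Variables (k : fieldType) (V : finType).
Local Open Scope ring_scope.

(* Boundary of a cone: coning by a new vertex v anticommutes with the
   boundary, up to the signs of v. *)
Lemma bcoef_cone (G H : {set V}) v : v \notin G -> v \notin H -> #|G| = #|H|.+1 ->
  bsign k G v * bcoef k G H = - (bsign k H v * bcoef k (v |: G) (v |: H)).
Proof.
move=> vG vH cG; have [HG | nHG] := boolP (H \subset G).
  have [u uH EG] := subset_card_succ HG cG; subst G.
  have uv : u != v by apply: contraNneq vG => <-; rewrite setU11.
  have uvH : u \notin v |: H by rewrite !inE negb_or uv.
  by rewrite setUCA !bcoef_setU1 // bsign_swap // mulrC.
rewrite !bcoef_notsub ?mulr0 ?oppr0 //; apply: contra nHG => vHG.
by rewrite -(setU1K vG) subsetD1 vH andbT (subset_trans (subsetUr [set v] H)).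
Qed.

(* The two paths a |: (b |: H) -> a |: H -> H and -> b |: H -> H cancel. *)
Lemma bcoef_sum_codim2 (X : {set {set V}}) (hX : simplicial_complex X)
  (H : {set V}) a b : a != b -> a \notin H -> b \notin H -> a |: (b |: H) \in X ->
  \sum_(F in faces X #|H|.+1) bcoef k (a |: (b |: H)) F * bcoef k F H = 0.
Proof.
move=> ab aH bH abHX.
have face_of u : u \notin H -> u |: H \subset a |: (b |: H) -> u |: H \in faces X #|H|.+1.
  by move=> uH uHsub; rewrite inE cardsU1 uH add1n eqxx (hX _ _ abHX uHsub).
have aHF := face_of a aH (setUS [set a] (subsetUr [set b] H)).
have bHF : b |: H \in faces X #|H|.+1 by rewrite face_of // setUCA setUS // subsetUr.
have bHa : b |: H != a |: H.
  by apply: contraNneq bH => /setP/(_ b); rewrite !inE eqxx eq_sym (negbTE ab).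
rewrite (bigD1 (a |: H)) // (bigD1 (b |: H)) /=; last by rewrite bHF.
rewrite big1 ?addr0 => [|F /andP [/andP [FX nFa] nFb]].
  have -> : bcoef k (a |: (b |: H)) (a |: H) = bsign k (a |: H) b.
    by rewrite setUCA bcoef_setU1 // !inE negb_or eq_sym ab.
  have -> : bcoef k (a |: (b |: H)) (b |: H) = bsign k (b |: H) a.
    by rewrite bcoef_setU1 // !inE negb_or ab.
  by rewrite !bcoef_setU1 // bsign_swap // addNr.
have [HF | nHF] := boolP (H \subset F); last by rewrite (bcoef_notsub _ nHF) mulr0.
have [FF2 | nFF2] := boolP (F \subset a |: (b |: H)); last by rewrite bcoef_notsub ?mul0r.
move: FX; rewrite inE => /andP [_ /eqP cF].
have [u uH EF] := subset_card_succ HF cF.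
move: (subsetP FF2 u); rewrite EF setU11 !inE (negbTE uH) orbF => /(_ isT).
by case/orP => /eqP Eu; [move: nFa | move: nFb]; rewrite EF Eu eqxx.
Qed.

Lemma bcoef_sum0 (X : {set {set V}}) (hX : simplicial_complex X) (F2 H : {set V}) :
  F2 \in X -> #|F2| = #|H|.+2 ->
  \sum_(F in faces X #|H|.+1) bcoef k F2 F * bcoef k F H = 0.
Proof.
move=> F2X cF2; have [HF2 | nHF2] := boolP (H \subset F2).
  have [a [b [ab aH bH EF2]]] := subset_card_succ2 HF2 cF2; subst F2.
  exact: bcoef_sum_codim2.
apply: big1 => F _; have [HF | nHF] := boolP (H \subset F); last first.
  by rewrite (bcoef_notsub _ nHF) mulr0.
rewrite bcoef_notsub ?mul0r //; apply: contra nHF2 => FF2.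
exact: subset_trans FF2.
Qed.

Lemma boundary_boundary (X : {set {set V}}) (hX : simplicial_complex X)
  (D : {set V} -> k) (H : {set V}) :
  boundary X #|H|.+1 (boundary X #|H|.+2 D) H = 0.
Proof.
rewrite /boundary; under eq_bigr => A _ do rewrite big_distrl.
rewrite exchange_big /=; apply: big1 => F2; rewrite inE => /andP [F2X /eqP cF2].
under eq_bigr => A _ do rewrite -mulrA.
by rewrite -big_distrr /= bcoef_sum0 ?mulr0.
Qed.
End BoundarySquared.

Section Links.
Variable V : finType.

Lemma setI1_eq0 (G : {set V}) x : (G :&: [set x] == set0) = (x \notin G).
Proof. by rewrite setI_eq0 disjoint_sym disjoints1. Qed.

Lemma disjoint_notin (G F : {set V}) x : G :&: F == set0 -> x \in G -> x \notin F.
Proof. by rewrite setI_eq0 => /disjointFr/[apply] ->. Qed.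

Lemma mem_link (K : {set {set V}}) (F G : {set V}) :
  (G \in link K F) = (G :&: F == set0) && (G :|: F \in K).
Proof.
apply/imsetP/andP => [[A] | [GF GFK]].
  rewrite inE => /andP [AK FA] ->; split; first by rewrite setIDAC setD_eq0 subsetIr.
  suff -> : A :\: F :|: F = A by [].
  apply/setP => x; rewrite !inE.
  by case: (boolP (x \in F)) => xF /=; rewrite ?orbF // (subsetP FA).
exists (G :|: F); first by rewrite inE GFK subsetUr.
apply/setP => x; rewrite !inE; case: (boolP (x \in G)) => xG /=.
  by rewrite (disjoint_notin GF xG).
by rewrite andNb.
Qed.
End Links.

(* Splitting L = lk_K(F)[W] at a vertex v of W outside F: the faces avoiding
   v form L0 = lk_K(F)[W \ v] and the link of v in L is L1 = lk_K(F u v)[W \ v]. *)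
Section VertexSplit.
Variables (k : fieldType) (V : finType) (K : {set {set V}}) (F W : {set V}) (v : V).
Hypotheses (hK : simplicial_complex K) (vW : v \in W) (vF : v \notin F).
Local Open Scope ring_scope.

Local Notation L := (induced (link K F) W).
Local Notation L0 := (induced (link K F) (W :\ v)).
Local Notation L1 := (induced (link K (v |: F)) (W :\ v)).

Lemma memL G : (G \in L) = [&& G :&: F == set0, G :|: F \in K & G \subset W].
Proof. by rewrite inE mem_link andbA. Qed.

Lemma L_complex : simplicial_complex L.
Proof.
move=> A B; rewrite !memL => /and3P [dA AK AW] BA; apply/and3P; split.
- by rewrite setI_eq0 (disjointWl BA) // -setI_eq0.
- by apply: hK AK _; apply: setSU.
- exact: subset_trans BA AW.
Qed.

Lemma memL0 G : (G \in L0) = (G \in L) && (v \notin G).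
Proof. by rewrite !inE subsetD1 andbA. Qed.

Lemma memL1 G : (G \in L1) = (v \notin G) && (v |: G \in L).
Proof.
rewrite inE mem_link memL subsetD1 setIUr setU_eq0 setI1_eq0 setIUl setU_eq0.
rewrite (setIC [set v]) setI1_eq0 vF setUCA -setUA subUset sub1set vW /=.
by case: (v \in G); rewrite /= ?andbT -?andbA.
Qed.

Lemma facesL0 G s : (G \in faces L0 s) = (G \in faces L s) && (v \notin G).
Proof. by rewrite [LHS]inE memL0 [in RHS]inE andbAC. Qed.

Lemma facesL1 G s : (G \in faces L1 s) = (v \notin G) && (v |: G \in faces L s.+1).
Proof.
rewrite [LHS]inE memL1 [in RHS]inE cardsU1.
by case: (v \in G); rewrite ?andbF //= add1n eqSS andbA.
Qed.

Lemma card_facesL1 G s : G \in faces L1 s -> #|G| = s.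
Proof. by rewrite inE => /andP [_ /eqP]. Qed.

Lemma sum_facesL (f : {set V} -> k) s :
  \sum_(A in faces L s) f A =
  \sum_(A in faces L s | v \in A) f A + \sum_(A in faces L0 s) f A.
Proof.
rewrite (bigID (fun A : {set V} => v \in A)) /=; congr (_ + _).
by apply: eq_bigl => A; rewrite facesL0.
Qed.

Lemma sum_facesL_cone (f : {set V} -> k) s :
  \sum_(A in faces L s.+1 | v \in A) f A = \sum_(G in faces L1 s) f (v |: G).
Proof.
rewrite (reindex_onto (fun G => v |: G) (fun A => A :\ v)) /=; last first.
  by move=> A /andP [_ vA]; rewrite setD1K.
apply: eq_bigl => G; rewrite facesL1 setU11 andbT.
have [vG | vG] /= := boolP (v \in G); last by rewrite setU1K // eqxx andbT.
suff -> : ((v |: G) :\ v == G) = false by rewrite andbF.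
by apply/negbTE; apply: contraTneq vG => <-; rewrite setD11.
Qed.

Lemma boundary_cone (c : {set V} -> k) s (H : {set V}) : v \notin H ->
  boundary L s.+1 c (v |: H) =
  \sum_(G in faces L1 s) c (v |: G) * bcoef k (v |: G) (v |: H).
Proof.
move=> vH; rewrite /boundary sum_facesL sum_facesL_cone [X in _ + X]big1 ?addr0 //.
move=> A; rewrite facesL0 => /andP [_ vA]; rewrite bcoef_notsub ?mulr0 //.
by apply: contra vA => /subsetP; apply; rewrite setU11.
Qed.

Lemma cycle_link q c : (0 < q)%N -> is_cycle L q.+1 c ->
  is_cycle L1 q (fun G => c (v |: G) * bsign k G v).
Proof.
move=> q_gt0 Z H HL1; have := HL1; rewrite facesL1 (prednK q_gt0) => /andP [vH HL].
transitivity (- bsign k H v * boundary L q.+1 c (v |: H)); last by rewrite Z ?mulr0.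
rewrite boundary_cone // /boundary big_distrr; apply: eq_bigr => G GL1.
have vG : v \notin G by move: GL1; rewrite facesL1 => /andP [].
have cG : #|G| = #|H|.+1 by rewrite (card_facesL1 GL1) (card_facesL1 HL1) prednK.
by rewrite /= -mulrA bcoef_cone //; ring.
Qed.

(* The cone over a chain d of L1 with apex v, as a chain of L. *)
Definition cone_chain (d : {set V} -> k) (A : {set V}) : k :=
  - (d (A :\ v) * bsign k (A :\ v) v).

Lemma boundary_cone_chain q d G : G \in faces L1 q ->
  boundary L q.+2 (cone_chain d) (v |: G) = bsign k G v * boundary L1 q.+1 d G.
Proof.
move=> GL1; have vG : v \notin G by move: GL1; rewrite facesL1 => /andP [].
rewrite boundary_cone // /boundary big_distrr; apply: eq_bigr => G2 G2L1 /=.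
have vG2 : v \notin G2 by move: G2L1; rewrite facesL1 => /andP [].
have cG2 : #|G2| = #|G|.+1 by rewrite (card_facesL1 G2L1) (card_facesL1 GL1).
have -> : bcoef k (v |: G2) (v |: G) = - (bsign k G v * (bsign k G2 v * bcoef k G2 G)).
  by rewrite bcoef_cone // mulrN mulrA bsign_sq mul1r opprK.
rewrite /cone_chain setU1K // mulrNN -[RHS]mulr1 -(bsign_sq k G2 v); ring.
Qed.

Definition zero_ext (e : {set V} -> k) (A : {set V}) : k :=
  if v \in A then 0 else e A.

Lemma boundary_zero_ext s e A :
  boundary L s (zero_ext e) A = if v \in A then 0 else boundary L0 s e A.
Proof.
rewrite /boundary sum_facesL big1 ?add0r => [|A2 /andP [_ vA2]]; last first.
  by rewrite /zero_ext vA2 mul0r.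
case: ifP => vA.
  apply: big1 => A2; rewrite facesL0 => /andP [_ vA2].
  by rewrite bcoef_notsub ?mulr0 //; apply: contra vA2 => /subsetP; apply.
apply: eq_bigr => A2; rewrite facesL0 => /andP [_ vA2].
by rewrite /zero_ext (negbTE vA2).
Qed.

Lemma cycle_deletion s (y : {set V} -> k) : is_cycle L s y ->
  (forall A, A \in faces L s -> v \in A -> y A = 0) -> is_cycle L0 s y.
Proof.
move=> Z y0 H; rewrite facesL0 => /andP [HL _].
rewrite -(Z H HL) [RHS]/boundary sum_facesL big1 ?add0r // => A /andP [AL vA].
by rewrite y0 ?mul0r.
Qed.

(* If L0 is acyclic in degree q, a non-bounding q-cycle of L restricts to a
   non-bounding (q-1)-cycle of the link L1: otherwise subtracting the
   boundary of the cone over its filling leaves a cycle of L0, whose filling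
   together with the cone fills c. *)
Lemma link_not_boundary q c :
  (forall y : {set V} -> k, is_cycle L0 q.+1 y -> is_boundary L0 q.+1 y) ->
  is_cycle L q.+1 c -> ~ is_boundary L q.+1 c ->
  ~ is_boundary L1 q (fun G => c (v |: G) * bsign k G v).
Proof.
move=> acyclic0 Z NB [d Hd]; set D := cone_chain d.
have DA A : A \in faces L q.+1 -> v \in A -> boundary L q.+2 D A = c A.
  move=> AL vA; have AvL1 : A :\ v \in faces L1 q by rewrite facesL1 setD11 setD1K.
  by rewrite -(setD1K vA) boundary_cone_chain // Hd // mulrCA bsign_sq mulr1.
pose y A := c A - boundary L q.+2 D A.
have [e He] : is_boundary L0 q.+1 y.
  apply: acyclic0; apply: cycle_deletion => [H HL | A AL vA]; last by rewrite /y DA ?subrr.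
  have cH : #|H| = q by move: HL; rewrite inE => /andP [_ /eqP].
  by rewrite /y boundaryB Z // -cH boundary_boundary ?subrr //; apply: L_complex.
apply: NB; exists (fun A => D A + zero_ext e A) => A AL.
rewrite boundaryD boundary_zero_ext; case: ifP => vA; first by rewrite DA // addr0.
by rewrite He ?facesL0 ?AL ?vA // /y addrC subrK.
Qed.
End VertexSplit.

Section Girth.
Variables (k : fieldType) (V : finType) (K : {set {set V}}).

Lemma girth_minimizer q n : girth k K q = Some n ->
  exists W, [/\ W \in girth_set k K q, #|W| = n &
                forall W', W' \in girth_set k K q -> n <= #|W'|].
Proof.
rewrite /girth; case: pickP => // W0 W0girth [<-].
by case: arg_minnP => // W; exists W.
Qed.

Lemma girth_le q W : W \in girth_set k K q ->
  exists2 m, girth k K q = Some m & m <= #|W|.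
Proof.
move=> Wgirth; rewrite /girth; case: pickP => [W0 W0girth | /(_ W)]; last by rewrite Wgirth.
by case: arg_minnP => // W1 _ W1min; exists #|W1|; last exact: W1min.
Qed.

Lemma girth_step (hK : simplicial_complex K) q n : 0 < q ->
  girth k K q.+1 = Some n -> exists2 m, girth k K q = Some m & m <= n.-1.
Proof.
move=> q_gt0 /girth_minimizer [W [WG <- Wmin]].
move: WG; rewrite inE => /exists_inP [F FK /rhom_nonzeroP [c [Z NB]]].
have [A AL _] := cycle_support NB.
move: AL; rewrite inE memL => /andP [/and3P [dA AFK AW] /eqP cA].
have [v vA] : exists v, v \in A by apply/set0Pn; rewrite -card_gt0 cA.
have vW := subsetP AW v vA; have vF := disjoint_notin dA vA.
have cW : #|W| = #|W :\ v|.+1 by rewrite (cardsD1 v W) vW.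
have vFK : v |: F \in K by apply: hK AFK _; rewrite setSU // sub1set.
have acyclic0 (y : {set V} -> k) : is_cycle (induced (link K F) (W :\ v)) q.+1 y ->
    is_boundary (induced (link K F) (W :\ v)) q.+1 y.
  apply: rhom_zeroP; apply/negP => nz.
  suff : #|W| <= #|W :\ v| by rewrite cW ltnn.
  by apply: Wmin; rewrite inE; apply/exists_inP; exists F.
have : W :\ v \in girth_set k K q.
  rewrite inE; apply/exists_inP; exists (v |: F) => //; apply/rhom_nonzeroP.
  exists (fun G => c (v |: G) * bsign k G v)%R; split.
    by apply: cycle_link.
  by apply: link_not_boundary.
by case/girth_le => m Hm mle; exists m; rewrite // cW.
Qed.
End Girth.

Theorem mainTheorem11 (k : fieldType) (V : finType) (K : {set {set V}})
  (hK : simplicial_complex K) (p n : nat)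
  (hp : girth k K p.+1 = Some n) :
  forall j : nat, j <= p ->
    exists m : nat, girth k K (p - j).+1 = Some m /\ m <= n - j.
Proof.
elim=> [|j IH] le_jp; first by exists n; rewrite !subn0.
have [m [Hm m_le]] := IH (ltnW le_jp).
have pj_gt0 : 0 < p - j by rewrite subn_gt0.
have [m' Hm' m'_le] := girth_step hK pj_gt0 Hm.
exists m'; rewrite subnS prednK ?subn_gt0 //; split => //.
by rewrite (leq_trans m'_le) // subnS -!subn1 leq_sub2r.
Qed.
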